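(* Let $\mathscr{S}\subset\mathbb{Z}^2$ be a finite step set, $\theta\in[0,\pi/2)$, and $\delta>0$. Then there exists a context-free grammar with $\mathcal{O}(1/\delta)$ non-terminals and $\mathcal{O}(1/\delta^2)$ rules which generates a $\delta$-rational approximation $\mathrm{walks}(H_{\theta_r},\mathscr{S})$ of $\mathrm{walks}(H_\theta,\mathscr{S})$.
   Context: $H_\theta=\{(x,y):x\sin\theta+y\cos\theta\ge0\}$; $\mathrm{walks}(C,\mathscr{S})$ is the set of walks $x_0=(0,0),x_1,\dots,x_n$ ($n\ge0$) with $x_{j+1}-x_j\in\mathscr{S}$ and all $x_i\in C$. A half-plane model $\mathrm{walks}(H_{\theta_r},\mathscr{S})$ is a $\delta$-rational approximation of $\mathrm{walks}(H_\theta,\mathscr{S})$ if $\tan\theta_r\in\mathbb{Q}$ and $|\tan\theta-\tan\theta_r|\le\delta$. The grammar generates the walks as words over the alphabet $\mathscr{S}$. *)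

From Stdlib Require Import Reals ZArith List.
Import ListNotations.
Open Scope R_scope.

Definition step := (Z * Z)%type.

Definition inH (theta : R) (p : step) : Prop :=
  IZR (fst p) * sin theta + IZR (snd p) * cos theta >= 0.

Fixpoint vsum (w : list step) : step :=
  match w with
  | [] => (0%Z, 0%Z)
  | s :: w' => (fst s + fst (vsum w'), snd s + snd (vsum w'))%Z
  end.

(* The word w over the alphabet S encodes a walk in walks(H_theta, S):
   every letter is a step of S and all points x_0 = (0,0), x_1, ..., x_n
   (prefix sums) lie in H_theta. *)
Definition walk_word (S : list step) (theta : R) (w : list step) : Prop :=
  (forall s, In s w -> In s S) /\
  (forall k, (k <= length w)%nat -> inH theta (vsum (firstn k w))).

Definition is_rational (x : R) : Prop :=
  exists p q : Z, q <> 0%Z /\ x = IZR p / IZR q.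

Definition symbol := (nat + step)%type.

Record cfg := {
  nnt : nat;
  start : nat;
  rules : list (nat * list symbol)
}.

Definition cfg_wf (G : cfg) (S : list step) : Prop :=
  (start G < nnt G)%nat /\
  forall A rhs, In (A, rhs) (rules G) ->
    (A < nnt G)%nat /\
    forall x, In x rhs ->
      match x with
      | inl B => (B < nnt G)%nat
      | inr t => In t S
      end.

Inductive derives (G : cfg) : nat -> list step -> Prop :=
| der_rule : forall A rhs w,
    In (A, rhs) (rules G) -> derives_seq G rhs w -> derives G A w
with derives_seq (G : cfg) : list symbol -> list step -> Prop :=
| ds_nil : derives_seq G [] []
| ds_term : forall t rhs w,
    derives_seq G rhs w -> derives_seq G (inr t :: rhs) (t :: w)
| ds_nt : forall B rhs u w,
    derives G B u -> derives_seq G rhs w -> derives_seq G (inl B :: rhs) (u ++ w).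

Definition generates (G : cfg) (w : list step) : Prop := derives G (start G) w.

(* Take q the first integer above 1/delta and p = floor (q tan theta), so that
   theta_r = atan (p/q) is within delta in tangent.  A word is a walk in
   H_theta_r iff its prefix heights under the integer form h (x,y) = p x + q y
   stay nonnegative, and every step changes the height by at most
   N = O(p + q) = O(1/delta).  Cutting a walk at its successive new minima
   writes it as a chain of first passages below the current minimum followed
   by a walk staying above it; a first passage of depth d <= N in turn is a
   single step, or a step followed by a chain and a shorter first passage.
   The resulting grammar has one nonterminal per depth, hence O(N)
   nonterminals, and its rules are indexed by a step and at most two depths,
   hence O(N^2) rules. *)

From Stdlib Require Import Reals ZArith List Lia Lra Psatz Wf_nat.
Import ListNotations.

Local Open Scope Z_scope.

Section Heights.

Variable h : step -> Z.

Fixpoint height (w : list step) : Z :=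
  match w with [] => 0 | a :: w' => h a + height w' end.

Fixpoint stays_nonneg (c : Z) (w : list step) : Prop :=
  0 <= c /\ match w with [] => True | a :: w' => stays_nonneg (c + h a) w' end.

Definition first_passage (c d : Z) (w : list step) : Prop :=
  exists w0 a, w = w0 ++ [a] /\ stays_nonneg c w0 /\ c + height w0 + h a = - d.

Inductive descent_chain : Z -> list step -> Prop :=
| chain_nil : descent_chain 0 []
| chain_snoc v e x y : descent_chain v x -> 1 <= e -> first_passage 0 e y ->
    descent_chain (v + e) (x ++ y).

Lemma height_app x y : height (x ++ y) = height x + height y.
Proof. induction x; simpl; lia. Qed.

Lemma stays_nonneg_ge0 c w : stays_nonneg c w -> 0 <= c.
Proof. destruct w; simpl; tauto. Qed.

Lemma stays_nonneg_app x : forall c y,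
  stays_nonneg c (x ++ y) <-> stays_nonneg c x /\ stays_nonneg (c + height x) y.
Proof.
  induction x as [|a x IH]; intros c y; simpl.
  - rewrite Z.add_0_r. split; [|tauto].
    intro H. pose proof (stays_nonneg_ge0 _ _ H). tauto.
  - rewrite IH, Z.add_assoc. tauto.
Qed.

Lemma stays_nonneg_mono w : forall c c', stays_nonneg c w -> c <= c' -> stays_nonneg c' w.
Proof.
  induction w as [|a w IH]; simpl; intros c c' [Hc Hw] Hcc'; split; try lia; auto.
  apply (IH (c + h a)); auto; lia.
Qed.

Lemma stays_nonneg_end c w : stays_nonneg c w -> 0 <= c + height w.
Proof.
  rewrite <- (app_nil_r w) at 1. rewrite stays_nonneg_app.
  intros [_ H]. exact (stays_nonneg_ge0 _ _ H).
Qed.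

Lemma stays_nonneg_prefixes w : forall c,
  stays_nonneg c w <-> forall k, (k <= length w)%nat -> 0 <= c + height (firstn k w).
Proof.
  induction w as [|a w IH]; intro c; simpl.
  - split.
    + intros [Hc _] k Hk. replace k with 0%nat by lia. simpl. lia.
    + intro H. specialize (H 0%nat (le_n _)). simpl in H. split; [lia | exact I].
  - rewrite IH. split.
    + intros [Hc Hw] [|k] Hk; simpl; [lia|]. specialize (Hw k ltac:(lia)). lia.
    + intro H. split; [specialize (H 0%nat ltac:(lia)); simpl in H; lia|].
      intros k Hk. specialize (H (S k) ltac:(lia)). simpl in H. lia.
Qed.

Lemma first_passage_spec d c x : first_passage 0 d x -> 0 <= d <= c ->
  stays_nonneg c x /\ height x = - d.
Proof.
  intros (x0 & a & -> & Hx0 & Hd) Hdc. rewrite height_app. simpl.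
  split; [|lia]. apply stays_nonneg_app. split.
  - eapply stays_nonneg_mono; eauto; lia.
  - pose proof (stays_nonneg_end _ _ Hx0). simpl. lia.
Qed.

Lemma descent_chain_spec v x : descent_chain v x ->
  stays_nonneg v x /\ height x = - v /\ 0 <= v.
Proof.
  induction 1 as [|v e x y _ (Hx & Hxh & Hv) He Hy].
  - simpl. lia.
  - destruct (first_passage_spec e e y Hy ltac:(lia)) as [Hys Hyh].
    rewrite stays_nonneg_app, height_app. repeat split; try lia.
    + eapply stays_nonneg_mono; eauto; lia.
    + replace (v + e + height x) with e by lia. exact Hys.
Qed.

(* Cutting [w] after each new minimum: what precedes the last minimum is a
   chain of first passages, and from there on the walk stays above it. *)
Lemma stays_nonneg_decomp c w : stays_nonneg c w ->
  exists v x y, w = x ++ y /\ descent_chain v x /\ stays_nonneg 0 y /\ 0 <= v <= c.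
Proof.
  induction w as [|a w IH] using rev_ind; intro Hw.
  - exists 0, [], []. pose proof (stays_nonneg_ge0 _ _ Hw).
    repeat split; try constructor; simpl; lia.
  - apply stays_nonneg_app in Hw as [Hw Ha].
    destruct (IH Hw) as (v & x & y & -> & Hx & Hy & Hv).
    destruct (descent_chain_spec _ _ Hx) as (_ & Hxh & _).
    rewrite height_app in Ha. simpl in Ha.
    pose proof (stays_nonneg_end _ _ Hy) as Hyh.
    destruct (Z_lt_le_dec (height y + h a) 0) as [Hneg | Hnonneg].
    + exists (v - (height y + h a)), (x ++ y ++ [a]), [].
      split; [now rewrite app_nil_r, app_assoc|]. split; [|repeat split; simpl in *; lia].
      replace (v - (height y + h a)) with (v + - (height y + h a)) by lia.
      constructor; [exact Hx | lia|]. exists y, a. split; [reflexivity|]. split; [exact Hy | lia].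
    + exists v, x, (y ++ [a]). split; [now rewrite app_assoc|].
      repeat split; try lia; auto. apply stays_nonneg_app. simpl. split; [exact Hy | lia].
Qed.

Lemma first_passage_decomp c d w : first_passage c d w ->
  exists v x y, w = x ++ y /\ descent_chain v x /\ first_passage 0 (c + d - v) y /\ 0 <= v <= c.
Proof.
  intros (w0 & a & -> & Hw0 & Hd).
  destruct (stays_nonneg_decomp _ _ Hw0) as (v & x & y & -> & Hx & Hy & Hv).
  exists v, x, (y ++ [a]). split; [now rewrite app_assoc|]. split; [exact Hx|]. split; [|exact Hv].
  exists y, a. split; [reflexivity|]. split; [exact Hy|].
  destruct (descent_chain_spec _ _ Hx) as (_ & Hxh & _). rewrite height_app in Hd. lia.
Qed.

Lemma first_passage_depth_le c d w M : first_passage c d w ->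
  (forall s, In s w -> Z.abs (h s) <= M) -> d <= M.
Proof.
  intros (w0 & a & -> & Hw0 & Hd) HM. pose proof (stays_nonneg_end _ _ Hw0).
  specialize (HM a ltac:(apply in_or_app; right; left; reflexivity)). lia.
Qed.

Lemma stays_nonneg_cons_chain s v x y : v <= h s -> descent_chain v x ->
  stays_nonneg 0 y -> stays_nonneg 0 (s :: x ++ y).
Proof.
  intros Hv Hx Hy. destruct (descent_chain_spec _ _ Hx) as (Hxs & Hxh & Hv0).
  simpl. split; [lia|]. apply stays_nonneg_app. split.
  - eapply stays_nonneg_mono; eauto.
  - eapply stays_nonneg_mono; eauto. lia.
Qed.

Lemma first_passage_cons_chain s v d x y : v <= h s -> descent_chain v x ->
  first_passage 0 (h s + d - v) y -> first_passage 0 d (s :: x ++ y).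
Proof.
  intros Hv Hx (y0 & a & -> & Hy0 & Hd).
  exists (s :: x ++ y0), a. split; [now rewrite app_assoc|]. split.
  - now apply stays_nonneg_cons_chain with v.
  - destruct (descent_chain_spec _ _ Hx) as (_ & Hxh & _). simpl. rewrite height_app. lia.
Qed.

Lemma first_passage_cons_cases d w : first_passage 0 d w ->
  (exists s, w = [s] /\ h s = - d) \/
  (exists s v x y, w = s :: x ++ y /\ descent_chain v x /\ 0 <= v <= h s /\
     first_passage 0 (h s + d - v) y).
Proof.
  intros ([|s w0] & a & -> & Hw0 & Hd).
  - left. exists a. split; [reflexivity | simpl in Hd; lia].
  - right. destruct Hw0 as [_ Hw0].
    assert (Hp : first_passage (h s) d (w0 ++ [a])).
    { exists w0, a. split; [reflexivity|]. split; [exact Hw0 | simpl in Hd; lia]. }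
    destruct (first_passage_decomp _ _ _ Hp) as (v & x & y & Hxy & Hx & Hy & Hv).
    exists s, v, x, y. simpl. rewrite <- Hxy. auto.
Qed.

End Heights.

Fixpoint seq_lang (L : nat -> list step -> Prop) (rhs : list symbol) (w : list step) : Prop :=
  match rhs with
  | [] => w = []
  | inr t :: r => exists w', w = t :: w' /\ seq_lang L r w'
  | inl B :: r => exists u w', w = u ++ w' /\ L B u /\ seq_lang L r w'
  end.

Scheme derives_mut := Induction for derives Sort Prop
with derives_seq_mut := Induction for derives_seq Sort Prop.

Lemma derives_lang_closed G (L : nat -> list step -> Prop) :
  (forall A rhs w, In (A, rhs) (rules G) -> seq_lang L rhs w -> L A w) ->
  forall A w, derives G A w -> L A w.
Proof.
  intros HL A w D.
  apply (derives_mut G (fun A w _ => L A w) (fun rhs w _ => seq_lang L rhs w)); simpl; eauto 7.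
Qed.

Local Open Scope nat_scope.

Lemma in_guarded {A} (b : bool) (x y : A) :
  In y (if b then [x] else []) <-> b = true /\ x = y.
Proof. destruct b; simpl; intuition congruence. Qed.

Lemma length_flat_map_le {A B} (f : A -> list B) l k :
  (forall x, length (f x) <= k) -> length (flat_map f l) <= length l * k.
Proof.
  intro H. induction l as [|a l IH]; simpl; [lia|]. rewrite length_app. specialize (H a). lia.
Qed.

Lemma length_guarded {A} (b : bool) (x : A) : length (if b then [x] else []) <= 1.
Proof. destruct b; simpl; lia. Qed.

Section WalkGrammar.

Variables (h : step -> Z) (St : list step) (N : nat).

(* Nonterminal [0] generates the walks staying weakly above their start,
   [1 + v] (for [v <= N]) the descent chains of total depth [v], and
   [1 + N + d] (for [1 <= d <= N]) the first passages of depth [d]. *)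
Inductive walk_rule : nat -> list symbol -> Prop :=
| walk_rule_nil : walk_rule 0 []
| walk_rule_step s v : In s St -> v <= N -> (Z.of_nat v <= h s)%Z ->
    walk_rule 0 [inr s; inl (1 + v); inl 0]
| chain_rule_nil : walk_rule 1 []
| chain_rule_snoc v e : 1 <= e -> v + e <= N ->
    walk_rule (1 + (v + e)) [inl (1 + v); inl (1 + N + e)]
| pass_rule_last s d : In s St -> 1 <= d <= N -> h s = (- Z.of_nat d)%Z ->
    walk_rule (1 + N + d) [inr s]
| pass_rule_step s v d d' : In s St -> v <= N -> 1 <= d <= N -> d' <= N ->
    (Z.of_nat v <= h s)%Z -> (Z.of_nat d' = h s + Z.of_nat d - Z.of_nat v)%Z ->
    walk_rule (1 + N + d) [inr s; inl (1 + v); inl (1 + N + d')].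

Definition walk_step_rules : list (nat * list symbol) :=
  flat_map (fun s => flat_map (fun v =>
    if (Z.of_nat v <=? h s)%Z then [(0, [inr s; inl (1 + v); inl 0])] else [])
    (seq 0 (N + 1))) St.

Definition chain_rules : list (nat * list symbol) :=
  flat_map (fun v => flat_map (fun e =>
    if v + e <=? N then [(1 + (v + e), [inl (1 + v); inl (1 + N + e)])] else [])
    (seq 1 N)) (seq 0 N).

Definition pass_last_rules : list (nat * list symbol) :=
  flat_map (fun s => flat_map (fun d =>
    if (h s =? - Z.of_nat d)%Z then [(1 + N + d, [inr s])] else [])
    (seq 1 N)) St.

Definition pass_step_rules : list (nat * list symbol) :=
  flat_map (fun s => flat_map (fun v => flat_map (fun d =>
    let d' := (h s + Z.of_nat d - Z.of_nat v)%Z in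
    if andb (Z.of_nat v <=? h s)%Z (d' <=? Z.of_nat N)%Z
    then [(1 + N + d, [inr s; inl (1 + v); inl (1 + N + Z.to_nat d')])] else [])
    (seq 1 N)) (seq 0 (N + 1))) St.

Definition walk_rules : list (nat * list symbol) :=
  (0, []) :: (1, []) ::
  walk_step_rules ++ chain_rules ++ pass_last_rules ++ pass_step_rules.

Lemma in_walk_rules A rhs : In (A, rhs) walk_rules <-> walk_rule A rhs.
Proof.
  unfold walk_rules, walk_step_rules, chain_rules, pass_last_rules, pass_step_rules.
  simpl In. rewrite !in_app_iff. repeat setoid_rewrite in_flat_map.
  setoid_rewrite in_seq. setoid_rewrite in_guarded.
  setoid_rewrite Bool.andb_true_iff. setoid_rewrite Z.leb_le. setoid_rewrite Nat.leb_le.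
  setoid_rewrite Z.eqb_eq.
  split.
  - intros [E|[E|[H|[H|[H|H]]]]].
    + injection E as <- <-. constructor.
    + injection E as <- <-. constructor.
    + destruct H as (s & Hs & v & Hv & Hvs & E). injection E as <- <-. constructor; auto; lia.
    + destruct H as (v & Hv & e & He & Hve & E). injection E as <- <-. constructor; lia.
    + destruct H as (s & Hs & d & Hd & Hsd & E). injection E as <- <-. constructor; auto; lia.
    + destruct H as (s & Hs & v & Hv & d & Hd & [Hvs Hd'] & E). injection E as <- <-.
      constructor; auto; lia.
  - intros [| s v Hs Hv Hvs | | v e He Hve | s d Hs Hd Hsd | s v d d' Hs Hv Hd Hd' Hvs Hdd'];
      auto.
    + do 2 right. left. exists s. split; [auto|]. exists v. repeat split; auto; lia.
    + do 3 right. left. exists v. split; [lia|]. exists e. repeat split; lia.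
    + do 4 right. left. exists s. split; [auto|]. exists d. repeat split; auto; lia.
    + do 5 right. exists s. split; [auto|]. exists v. split; [lia|]. exists d.
      repeat split; try lia. rewrite <- Hdd', Nat2Z.id. reflexivity.
Qed.

Lemma walk_rules_length :
  length walk_rules <= 2 * (length St + 1) * (N + 1) * (N + 1).
Proof.
  assert (Hw : length walk_step_rules <= length St * (length (seq 0 (N + 1)) * 1)).
  { do 2 (apply length_flat_map_le; intro). apply length_guarded. }
  assert (Hc : length chain_rules <= length (seq 0 N) * (length (seq 1 N) * 1)).
  { do 2 (apply length_flat_map_le; intro). apply length_guarded. }
  assert (Hl : length pass_last_rules <= length St * (length (seq 1 N) * 1)).
  { do 2 (apply length_flat_map_le; intro). apply length_guarded. }
  assert (Hs : length pass_step_rules <=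
               length St * (length (seq 0 (N + 1)) * (length (seq 1 N) * 1))).
  { do 3 (apply length_flat_map_le; intro). apply length_guarded. }
  rewrite !length_seq in *. unfold walk_rules. simpl length. rewrite !length_app. nia.
Qed.

Definition walk_grammar : cfg := {| nnt := 2 * N + 2; start := 0; rules := walk_rules |}.

Local Notation G := walk_grammar.

Lemma walk_grammar_wf : cfg_wf G St.
Proof.
  split; [simpl; lia|]. intros A rhs Hin. apply in_walk_rules in Hin.
  destruct Hin; simpl; split; try lia;
    intros x Hx; repeat destruct Hx as [<- | Hx]; easy || lia.
Qed.

Definition nonterminal_lang (A : nat) (w : list step) : Prop :=
  incl w St /\
  match A with
  | 0 => stays_nonneg h 0 w
  | S v => if v <=? N then descent_chain h (Z.of_nat v) w
           else first_passage h 0 (Z.of_nat (v - N)) w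
  end.

Lemma nonterminal_lang_chain v w : v <= N ->
  nonterminal_lang (1 + v) w <-> incl w St /\ descent_chain h (Z.of_nat v) w.
Proof.
  intro Hv. unfold nonterminal_lang. simpl.
  now replace (v <=? N) with true by (symmetry; apply Nat.leb_le; lia).
Qed.

Lemma nonterminal_lang_pass d w : 1 <= d ->
  nonterminal_lang (1 + N + d) w <-> incl w St /\ first_passage h 0 (Z.of_nat d) w.
Proof.
  intro Hd. unfold nonterminal_lang. simpl.
  replace (N + d <=? N) with false by (symmetry; apply Nat.leb_gt; lia).
  now replace (N + d - N) with d by lia.
Qed.

Lemma walk_rule_closed A rhs w :
  walk_rule A rhs -> seq_lang nonterminal_lang rhs w -> nonterminal_lang A w.
Proof.
  destruct 1 as [| s v Hs Hv Hvs | | v e He Hve | s d Hs Hd Hsd | s v d d' Hs Hv Hd Hd' Hvs Hdd'];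
    simpl.
  - intros ->. split; [apply incl_nil_l | simpl; lia].
  - intros (w1 & -> & x & w2 & -> & Hx & y & w3 & -> & [Hy Hys] & ->).
    apply nonterminal_lang_chain in Hx as [Hx Hxc]; [|lia]. rewrite app_nil_r.
    split; [apply incl_cons, incl_app; assumption|].
    now apply stays_nonneg_cons_chain with (Z.of_nat v).
  - intros ->. apply nonterminal_lang_chain; [lia|]. split; [apply incl_nil_l | constructor].
  - intros (x & w1 & -> & Hx & y & w2 & -> & Hy & ->). rewrite app_nil_r.
    apply nonterminal_lang_chain in Hx as [Hx Hxc]; [|lia].
    apply nonterminal_lang_pass in Hy as [Hy Hyp]; [|lia].
    apply nonterminal_lang_chain; [lia|]. split; [now apply incl_app|].
    rewrite Nat2Z.inj_add. constructor; auto; lia.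
  - intros (w1 & -> & ->). apply nonterminal_lang_pass; [lia|].
    split; [now apply incl_cons|]. exists [], s. simpl. repeat split; lia.
  - intros (w1 & -> & x & w2 & -> & Hx & y & w3 & -> & Hy & ->). rewrite app_nil_r.
    apply nonterminal_lang_chain in Hx as [Hx Hxc]; [|lia].
    apply nonterminal_lang_pass in Hy as [Hy Hyp]; [|lia].
    apply nonterminal_lang_pass; [lia|]. split; [apply incl_cons, incl_app; assumption|].
    apply first_passage_cons_chain with (Z.of_nat v); auto. now rewrite <- Hdd'.
Qed.

Lemma walk_grammar_sound A w : derives G A w -> nonterminal_lang A w.
Proof.
  apply derives_lang_closed. intros A' rhs w' Hin.
  apply walk_rule_closed. now apply in_walk_rules.
Qed.

Lemma derives_nil A : walk_rule A [] -> derives G A [].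
Proof. intro H. apply der_rule with []; [now apply in_walk_rules | constructor]. Qed.

Lemma derives_letter A s : walk_rule A [inr s] -> derives G A [s].
Proof. intro H. apply der_rule with [inr s]; [now apply in_walk_rules | repeat constructor]. Qed.

Lemma derives_pair A B C x y : walk_rule A [inl B; inl C] ->
  derives G B x -> derives G C y -> derives G A (x ++ y).
Proof.
  intros H Hx Hy. rewrite <- (app_nil_r y).
  apply der_rule with [inl B; inl C]; [now apply in_walk_rules | repeat constructor; auto].
Qed.

Lemma derives_triple A s B C x y : walk_rule A [inr s; inl B; inl C] ->
  derives G B x -> derives G C y -> derives G A (s :: x ++ y).
Proof.
  intros H Hx Hy. rewrite <- (app_nil_r y).
  apply der_rule with [inr s; inl B; inl C]; [now apply in_walk_rules | repeat constructor; auto].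
Qed.

Hypothesis steps_bounded : forall s, In s St -> (Z.abs (h s) <= Z.of_nat N)%Z.

(* A chain may consist of a single passage spanning the whole word, so the
   passages are only assumed to be generated up to the length [n] of the word. *)
Lemma derives_chain n :
  (forall x, length x <= n -> incl x St -> forall d, (1 <= d <= Z.of_nat N)%Z ->
     first_passage h 0 d x -> derives G (1 + N + Z.to_nat d) x) ->
  forall v w, descent_chain h v w -> length w <= n -> incl w St -> (v <= Z.of_nat N)%Z ->
    derives G (1 + Z.to_nat v) w.
Proof.
  intros Hpass v w Hc. induction Hc as [|v e x y Hx IH He Hy]; intros Hn Hw HvN.
  - apply derives_nil, chain_rule_nil.
  - rewrite length_app in Hn. apply incl_app_inv in Hw as [Hwx Hwy].
    destruct (descent_chain_spec _ _ _ Hx) as (_ & _ & Hv).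
    rewrite Z2Nat.inj_add by lia.
    apply derives_pair with (1 + Z.to_nat v) (1 + N + Z.to_nat e).
    + apply chain_rule_snoc; lia.
    + apply IH; auto; lia.
    + apply Hpass; auto; lia.
Qed.

Lemma derives_pass w : incl w St -> forall d, (1 <= d <= Z.of_nat N)%Z ->
  first_passage h 0 d w -> derives G (1 + N + Z.to_nat d) w.
Proof.
  induction w as [w IH] using (induction_ltof1 _ (@length step)); unfold ltof in IH.
  intros Hw d Hd Hp.
  destruct (first_passage_cons_cases _ _ _ Hp)
    as [(s & -> & Hsd) | (s & v & x & y & -> & Hx & Hv & Hy)].
  - apply derives_letter, pass_rule_last; [apply Hw; left; reflexivity | lia | lia].
  - apply incl_cons_inv in Hw as [Hs Hw]. apply incl_app_inv in Hw as [Hwx Hwy].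
    pose proof (steps_bounded s Hs) as HsN.
    assert (Hy' : (h s + d - v <= Z.of_nat N)%Z).
    { apply (first_passage_depth_le h 0 _ y); [exact Hy|]. intros t Ht. auto. }
    assert (Hlen : length (s :: x ++ y) = S (length x + length y))
      by (simpl; now rewrite length_app).
    apply derives_triple with (1 + Z.to_nat v) (1 + N + Z.to_nat (h s + d - v)).
    + apply pass_rule_step; try lia. auto.
    + apply (derives_chain (length x)); auto; try lia.
      intros x' Hx'. apply IH. lia.
    + apply IH; auto; lia.
Qed.

Lemma derives_walk w : incl w St -> stays_nonneg h 0 w -> derives G 0 w.
Proof.
  induction w as [w IH] using (induction_ltof1 _ (@length step)); unfold ltof in IH.
  intros Hw Hs. destruct w as [|s w].
  - apply derives_nil, walk_rule_nil.
  - destruct Hs as [_ Hs]. simpl in Hs.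
    destruct (stays_nonneg_decomp _ _ _ Hs) as (v & x & y & -> & Hx & Hy & Hv).
    apply incl_cons_inv in Hw as [Hs' Hw]. apply incl_app_inv in Hw as [Hwx Hwy].
    pose proof (steps_bounded s Hs') as HsN.
    assert (Hlen : length (s :: x ++ y) = S (length x + length y))
      by (simpl; now rewrite length_app).
    apply derives_triple with (1 + Z.to_nat v) 0.
    + apply walk_rule_step; auto; lia.
    + apply (derives_chain (length x)); auto; try lia.
      intros x' _. apply derives_pass.
    + apply IH; auto; lia.
Qed.

Lemma walk_grammar_generates w : generates G w <-> incl w St /\ stays_nonneg h 0 w.
Proof.
  split; [apply walk_grammar_sound|].
  intros [Hw Hs]. now apply derives_walk.
Qed.

End WalkGrammar.

Local Open Scope Z_scope.

Definition slope_height (p q : Z) (s : step) : Z := p * fst s + q * snd s.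

Definition l1_size (S : list step) : Z :=
  fold_right (fun s acc => Z.abs (fst s) + Z.abs (snd s) + acc) 0 S.

Lemma l1_size_nonneg S : 0 <= l1_size S.
Proof. induction S; simpl; lia. Qed.

Lemma slope_height_bounded p q S s : 0 <= p -> 0 <= q -> In s S ->
  Z.abs (slope_height p q s) <= (p + q) * l1_size S.
Proof.
  intros Hp Hq Hs.
  assert (Hs1 : Z.abs (fst s) + Z.abs (snd s) <= l1_size S).
  { induction S as [|a S IH]; simpl in *; [tauto|].
    pose proof (l1_size_nonneg S). destruct Hs as [->|Hs]; [lia|]. specialize (IH Hs). lia. }
  unfold slope_height.
  assert (Z.abs (p * fst s + q * snd s) <= p * Z.abs (fst s) + q * Z.abs (snd s)).
  { rewrite <- (Z.abs_eq p), <- (Z.abs_eq q) at 2 by lia. rewrite <- !Z.abs_mul.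
    apply Z.abs_triangle. }
  nia.
Qed.

Lemma slope_height_uniform_bound p q S : 0 <= p -> 0 <= q ->
  exists N : nat, (INR N = (IZR p + IZR q) * IZR (l1_size S))%R /\
    forall s, In s S -> Z.abs (slope_height p q s) <= Z.of_nat N.
Proof.
  intros Hp Hq. pose proof (l1_size_nonneg S).
  exists (Z.to_nat ((p + q) * l1_size S)).
  rewrite INR_IZR_INZ, Z2Nat.id, <- plus_IZR, <- mult_IZR by nia.
  split; [reflexivity|]. intros s Hs. now apply slope_height_bounded.
Qed.

Lemma height_slope p q w : height (slope_height p q) w = slope_height p q (vsum w).
Proof. unfold slope_height. induction w as [|a w IH]; simpl; [lia|]. rewrite IH. ring. Qed.

Local Open Scope R_scope.

Lemma inH_atan_iff p q v : (0 < q)%Z ->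
  inH (atan (IZR p / IZR q)) v <-> (0 <= slope_height p q v)%Z.
Proof.
  intro Hq. set (th := atan (IZR p / IZR q)).
  assert (Hc : 0 < cos th).
  { destruct (atan_bound (IZR p / IZR q)). apply cos_gt_0; unfold th; lra. }
  assert (Hqr : 0 < IZR q) by (apply IZR_lt; lia).
  assert (Hs : sin th = IZR p / IZR q * cos th).
  { rewrite <- (tan_atan (IZR p / IZR q)). fold th. unfold tan. field. lra. }
  assert (E : IZR (fst v) * sin th + IZR (snd v) * cos th
              = (cos th / IZR q) * IZR (slope_height p q v)).
  { unfold slope_height. rewrite Hs, plus_IZR, !mult_IZR. field. lra. }
  assert (Hk : 0 < cos th / IZR q) by (apply Rdiv_lt_0_compat; lra).
  unfold inH. rewrite E. split; intro H.
  - apply le_IZR. nra.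
  - apply IZR_le in H. nra.
Qed.

Lemma walk_word_atan_iff S p q w : (0 < q)%Z ->
  walk_word S (atan (IZR p / IZR q)) w <-> incl w S /\ stays_nonneg (slope_height p q) 0 w.
Proof.
  intro Hq. unfold walk_word. rewrite stays_nonneg_prefixes.
  apply and_iff_compat_l. split; intros H k Hk; specialize (H k Hk).
  - rewrite height_slope. apply inH_atan_iff in H; [lia | exact Hq].
  - apply inH_atan_iff; [exact Hq|]. rewrite <- height_slope. lia.
Qed.

Lemma tan_nonneg theta : 0 <= theta < PI / 2 -> 0 <= tan theta.
Proof.
  intro Ht. pose proof PI_RGT_0.
  assert (0 < cos theta) by (apply cos_gt_0; lra).
  assert (0 <= sin theta) by (apply sin_ge_0; lra).
  unfold tan, Rdiv. apply Rmult_le_pos; [lra | left; apply Rinv_0_lt_compat; lra].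
Qed.

Lemma rational_approx t delta : 0 <= t -> 0 < delta ->
  exists p q : Z, (0 <= p)%Z /\ (0 < q)%Z /\ IZR p <= t * IZR q /\
    IZR q <= / delta + 1 /\ Rabs (t - IZR p / IZR q) <= delta.
Proof.
  intros Ht Hd.
  assert (Hx : 0 < / delta) by (apply Rinv_0_lt_compat; lra).
  destruct (archimed (/ delta)) as [Hq1 Hq2].
  set (q := up (/ delta)) in *.
  assert (Hq : 0 < IZR q) by lra.
  destruct (archimed (t * IZR q)) as [Hp1 Hp2].
  exists (up (t * IZR q) - 1)%Z, q. rewrite minus_IZR.
  assert (Hdq : / IZR q <= delta).
  { rewrite <- (Rinv_inv delta). apply Rinv_le_contravar; lra. }
  repeat split; try lra.
  - assert (0 < up (t * IZR q))%Z by (apply lt_0_IZR; nra). lia.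
  - apply lt_0_IZR. lra.
  - replace (t - (IZR (up (t * IZR q)) - 1) / IZR q)
      with ((t * IZR q - (IZR (up (t * IZR q)) - 1)) * / IZR q) by (field; lra).
    rewrite Rabs_pos_eq; [|apply Rmult_le_pos; [lra | left; apply Rinv_0_lt_compat; lra]].
    apply Rle_trans with (1 * / IZR q); [|lra].
    apply Rmult_le_compat_r; [left; apply Rinv_0_lt_compat|]; lra.
Qed.

Lemma max_depth_le t K x P Q : 0 <= t -> 0 <= K -> 0 < x ->
  P <= t * Q -> 0 < Q <= x + 1 -> (P + Q) * K + 1 <= ((t + 1) * K + 1) * (1 + x).
Proof.
  intros Ht HK Hx HP HQ.
  assert ((P + Q) * K <= (t + 1) * Q * K) by nra.
  assert ((t + 1) * Q * K <= (t + 1) * (x + 1) * K) by (apply Rmult_le_compat_r; nra).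
  nra.
Qed.

Lemma grammar_size_le n L B x : 0 <= n -> 0 <= L -> 1 <= B -> 0 < x ->
  n + 1 <= B * (1 + x) ->
  2 * n + 2 <= 4 * (L + 1) * B ^ 2 * (1 + x) /\
  2 * (L + 1) * ((n + 1) * (n + 1)) <= 4 * (L + 1) * B ^ 2 * (1 + x ^ 2).
Proof.
  intros Hn HL HB Hx HnB. split.
  - assert (2 * B <= 4 * (L + 1) * B ^ 2) by nra. nra.
  - assert (Hsq : (n + 1) * (n + 1) <= B ^ 2 * ((1 + x) * (1 + x))) by nra.
    assert (Hx2 : (1 + x) * (1 + x) <= 2 * (1 + x ^ 2)) by (pose proof (pow2_ge_0 (1 - x)); nra).
    apply Rle_trans with (2 * (L + 1) * (B ^ 2 * (2 * (1 + x ^ 2)))); [|right; ring].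
    apply Rmult_le_compat_l; [lra|].
    apply Rle_trans with (1 := Hsq). apply Rmult_le_compat_l; [apply pow2_ge_0 | exact Hx2].
Qed.

Lemma walk_grammar_size_le h S N B x : 1 <= B -> 0 < x -> INR N + 1 <= B * (1 + x) ->
  INR (nnt (walk_grammar h S N)) <= 4 * (INR (length S) + 1) * B ^ 2 * (1 + x) /\
  INR (length (rules (walk_grammar h S N))) <= 4 * (INR (length S) + 1) * B ^ 2 * (1 + x ^ 2).
Proof.
  intros HB Hx HN.
  destruct (grammar_size_le (INR N) (INR (length S)) B x) as [Hnnt Hrules];
    auto using pos_INR.
  split.
  - cbn [walk_grammar nnt]. rewrite plus_INR, mult_INR. simpl INR. lra.
  - pose proof (le_INR _ _ (walk_rules_length h S N)) as Hlen.
    rewrite !mult_INR, !plus_INR in Hlen. replace (INR 2) with 2 in Hlen by (simpl; lra).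
    replace (INR 1) with 1 in Hlen by reflexivity.
    cbn [walk_grammar rules]. eapply Rle_trans; [exact Hlen|].
    apply Rle_trans with (2 * (INR (length S) + 1) * ((INR N + 1) * (INR N + 1)));
      [right; ring | exact Hrules].
Qed.

Theorem mainTheorem8 (S : list step) (theta : R) (Htheta : 0 <= theta < PI / 2) :
  exists C : R, 0 < C /\
  forall delta : R, 0 < delta ->
    exists (G : cfg) (theta_r : R),
      (- (PI / 2) < theta_r < PI / 2) /\
      is_rational (tan theta_r) /\
      Rabs (tan theta - tan theta_r) <= delta /\
      INR (nnt G) <= C * (1 + / delta) /\
      INR (length (rules G)) <= C * (1 + / (delta ^ 2)) /\
      cfg_wf G S /\
      (forall w : list step, generates G w <-> walk_word S theta_r w).
Proof.
  pose proof (tan_nonneg theta Htheta) as Ht.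
  set (K := IZR (l1_size S)). set (B := (tan theta + 1) * K + 1).
  assert (HK : 0 <= K) by apply IZR_le, l1_size_nonneg.
  assert (HB : 1 <= B) by (unfold B; pose proof (Rmult_le_pos _ _ Ht HK); nra).
  exists (4 * (INR (length S) + 1) * B ^ 2). split; [pose proof (pos_INR (length S)); nra|].
  intros delta Hd. assert (Hx : 0 < / delta) by (apply Rinv_0_lt_compat; lra).
  destruct (rational_approx (tan theta) delta Ht Hd) as (p & q & Hp & Hq & Hpt & Hqd & Happrox).
  destruct (slope_height_uniform_bound p q S) as (N & HNK & HN); [lia | lia|].
  destruct (walk_grammar_size_le (slope_height p q) S N B (/ delta)) as [Hnnt Hrules];
    [exact HB | exact Hx | rewrite HNK; apply max_depth_le; auto; split; [apply IZR_lt|]; lia || lra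
    |].
  exists (walk_grammar (slope_height p q) S N), (atan (IZR p / IZR q)).
  rewrite tan_atan. split; [pose proof (atan_bound (IZR p / IZR q)); lra|].
  split; [exists p, q; split; [lia | reflexivity]|].
  split; [exact Happrox|]. split; [exact Hnnt|].
  split; [rewrite <- pow_inv; exact Hrules|].
  split; [apply walk_grammar_wf|].
  intro w. rewrite walk_word_atan_iff by lia. now apply walk_grammar_generates.
Qed.
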